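(* Let $G_3$ be the graph with vertices $v_1,\dots,v_8$ and edges $a_1=v_1v_2$, $a_2=v_2v_3$, $a_3=v_3v_4$, $a_4=v_4v_5$, $a_5=v_1v_5$, $a_6=v_1v_8$, $a_7=v_2v_6$, $a_8=v_3v_6$, $a_9=v_4v_7$, $a_{10}=v_5v_8$, $a_{11}=v_6v_7$, $a_{12}=v_7v_8$. Let $\gamma_1=e_1+e_3+e_{10}+e_{11}$, $\gamma_2=e_2+e_4+e_6+e_{11}$, $\gamma_3=e_3+e_5+e_7+e_{12}$, $\gamma_4=e_2+e_5+e_6+e_7+e_8+2e_9+e_{10}$, $\gamma_5=e_2+e_3+e_5+e_6+e_7+e_9+e_{10}+e_{11}$, and for $(k_1,\dots,k_5)\in\mathbb{R}^5$ put $\gamma(k)=\sum_{i=1}^5k_i\gamma_i$. Consider the following properties of $(k_1,\dots,k_5)$, each of which includes $k_1,k_2,k_3,k_4\in\mathbb{N}$: $P_a$: $k_5\in\mathbb{N}$; $P_b$: $-k_5\in\mathbb{P}$ and $\min\{k_1,k_4\}\ge -k_5$; $P_{c_1}$: $-k_5\in\mathbb{P}$, $\min\{k_1,k_4\}<-k_5$, $k_1\ge k_4$; $P_{c_2}$: $-k_5\in\mathbb{P}$, $\min\{k_1,k_4\}<-k_5$, $k_1<k_4$, $2k_1+k_5\ge0$; $P_{c_3}$: $-k_5\in\mathbb{P}$, $\min\{k_1,k_4\}<-k_5$, $k_1<k_4$, $2k_1+k_5<0$. For each $h\in\{a,b,c_1,c_2,c_3\}$ define $(l_1,\dots,l_5)$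 from $(k_1,\dots,k_5)$ by: $h=a$: $(k_1,\ k_2,\ k_3,\ k_4,\ k_5)$; $h=b$: $(k_1+k_5,\ k_2,\ k_3,\ k_4+k_5,\ -k_5-1)$; $h=c_1$: $(k_1-k_4,\ k_2+k_4+k_5,\ k_3+k_4+k_5,\ -k_5-k_4-1,\ 2k_4+k_5)$; $h=c_2$: $(k_2+k_1+k_5,\ k_3+k_1+k_5,\ k_4-k_1-1,\ -k_5-k_1-1,\ 2k_1+k_5)$; $h=c_3$: $(k_2+k_1+k_5,\ k_3+k_1+k_5,\ k_4+k_1+k_5,\ k_1,\ -k_5-2k_1-1)$. Then for each $h$, the set $P_h(S(G_3))$ of $(k_1,\dots,k_5)\in\mathbb{R}^5$ with $\gamma(k)\in S(G_3)$ satisfying $P_h$ equals $\{(l_1,\dots,l_5)\in\mathbb{N}^5\}$ with the $l_i$ given above; that is, $(k_1,\dots,k_5)\in\mathbb{R}^5$ satisfies $\gamma(k)\in S(G_3)$ and $P_h$ if and only if the corresponding $l_1,\dots,l_5$ all lie in $\mathbb{N}$.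
   Context: For a finite graph $G$ with edges $a_1,\dots,a_n$, $S_{\mathbb{R}}(G)$ is the set of vectors $(\alpha_1,\dots,\alpha_n)\in\mathbb{R}^n$ (real labels on edges) such that for every vertex the sum of the labels of incident edges is the same number $s$; magic labellings form $S(G)=S_{\mathbb{R}}(G)\cap\mathbb{N}^n$. For $G_3$, every element of $S_{\mathbb{R}}(G_3)$ is uniquely of the form $\gamma(k)$. $e_i$ is the $i$-th unit vector of $\mathbb{R}^{12}$, $\mathbb{N}=\{0,1,2,\dots\}$, $\mathbb{P}=\{1,2,\dots\}$. *)

From Stdlib Require Import Reals Lra Lia List.
Import ListNotations.
Open Scope R_scope.

Definition isN (x : R) : Prop := exists n : nat, x = INR n.
Definition isP (x : R) : Prop := exists n : nat, x = INR (S n).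

(* The graph G_3: edge a_i is the (i-1)-th entry (vertices v_1..v_8). *)
Definition G3_edges : list (nat * nat) :=
  [(1,2); (2,3); (3,4); (4,5); (1,5); (1,8);
   (2,6); (3,6); (4,7); (5,8); (6,7); (7,8)]%nat.

Definition incident (v i : nat) : bool :=
  let (a, b) := nth (i - 1) G3_edges (0%nat, 0%nat) in
  Nat.eqb a v || Nat.eqb b v.

(* A labelling is a vector (alpha_1,...,alpha_12), encoded as alpha : nat -> R
   read at indices 1..12. *)
Definition vertex_sum (alpha : nat -> R) (v : nat) : R :=
  sum_f_R0 (fun j => if incident v (S j) then alpha (S j) else 0) 11.

Definition in_SR (alpha : nat -> R) : Prop :=
  exists s : R, forall v : nat, (1 <= v <= 8)%nat -> vertex_sum alpha v = s.

Definition in_S (alpha : nat -> R) : Prop :=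
  in_SR alpha /\ forall i : nat, (1 <= i <= 12)%nat -> isN (alpha i).

Definition e (i j : nat) : R := if Nat.eqb i j then 1 else 0.

Definition gamma1 (j : nat) : R := e 1 j + e 3 j + e 10 j + e 11 j.
Definition gamma2 (j : nat) : R := e 2 j + e 4 j + e 6 j + e 11 j.
Definition gamma3 (j : nat) : R := e 3 j + e 5 j + e 7 j + e 12 j.
Definition gamma4 (j : nat) : R :=
  e 2 j + e 5 j + e 6 j + e 7 j + e 8 j + 2 * e 9 j + e 10 j.
Definition gamma5 (j : nat) : R :=
  e 2 j + e 3 j + e 5 j + e 6 j + e 7 j + e 9 j + e 10 j + e 11 j.

Definition gamma (k1 k2 k3 k4 k5 : R) (j : nat) : R :=
  k1 * gamma1 j + k2 * gamma2 j + k3 * gamma3 j + k4 * gamma4 j + k5 * gamma5 j.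

Inductive hcase : Type := Ha | Hb | Hc1 | Hc2 | Hc3.

Definition Pprop (h : hcase) (k1 k2 k3 k4 k5 : R) : Prop :=
  isN k1 /\ isN k2 /\ isN k3 /\ isN k4 /\
  match h with
  | Ha => isN k5
  | Hb => isP (- k5) /\ Rmin k1 k4 >= - k5
  | Hc1 => isP (- k5) /\ Rmin k1 k4 < - k5 /\ k1 >= k4
  | Hc2 => isP (- k5) /\ Rmin k1 k4 < - k5 /\ k1 < k4 /\ 2 * k1 + k5 >= 0
  | Hc3 => isP (- k5) /\ Rmin k1 k4 < - k5 /\ k1 < k4 /\ 2 * k1 + k5 < 0
  end.

Definition lvals (h : hcase) (k1 k2 k3 k4 k5 : R) : list R :=
  match h with
  | Ha => [k1; k2; k3; k4; k5]
  | Hb => [k1 + k5; k2; k3; k4 + k5; - k5 - 1]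
  | Hc1 => [k1 - k4; k2 + k4 + k5; k3 + k4 + k5; - k5 - k4 - 1; 2 * k4 + k5]
  | Hc2 => [k2 + k1 + k5; k3 + k1 + k5; k4 - k1 - 1; - k5 - k1 - 1; 2 * k1 + k5]
  | Hc3 => [k2 + k1 + k5; k3 + k1 + k5; k4 + k1 + k5; k1; - k5 - 2 * k1 - 1]
  end.

(* Every gamma(k) is a real magic labelling of G_3 (with vertex sum
   k1 + k2 + k3 + 2 k4 + 2 k5), so gamma(k) lies in S(G_3) exactly when its
   ten distinct entries are natural numbers.  Both P_h and "l in N^5" force
   k to be integral (the map k |-> l is affine with integral inverse), and
   for integral k every equivalence is a statement of linear integer
   arithmetic. *)

From Stdlib Require Import Reals List Lra Lia ZArith.
Import ListNotations.
Open Scope R_scope.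

Definition isZ (x : R) : Prop := exists z : Z, x = IZR z.

Lemma isN_IZR z : isN (IZR z) <-> (0 <= z)%Z.
Proof.
  split.
  - intros [n Hn]. rewrite INR_IZR_INZ in Hn. apply eq_IZR in Hn. lia.
  - intros Hz. exists (Z.to_nat z). rewrite INR_IZR_INZ, Z2Nat.id; auto.
Qed.

Lemma isP_IZR z : isP (IZR z) <-> (0 < z)%Z.
Proof.
  split.
  - intros [n Hn]. rewrite INR_IZR_INZ in Hn. apply eq_IZR in Hn. lia.
  - intros Hz. exists (Z.to_nat (z - 1)). rewrite INR_IZR_INZ. f_equal. lia.
Qed.

Lemma isN_isZ x : isN x -> isZ x.
Proof. intros [n ->]. exists (Z.of_nat n). apply INR_IZR_INZ. Qed.

Lemma isP_opp_isZ x : isP (- x) -> isZ x.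
Proof.
  intros [n Hn]. exists (- Z.of_nat (S n))%Z.
  rewrite opp_IZR, <- INR_IZR_INZ. lra.
Qed.

Lemma IZR_lt_iff a b : IZR a < IZR b <-> (a < b)%Z.
Proof. split; [apply lt_IZR | apply IZR_lt]. Qed.

Lemma IZR_ge_iff a b : IZR a >= IZR b <-> (a >= b)%Z.
Proof. split; [intros H; apply Rge_le, le_IZR in H; lia | apply IZR_ge]. Qed.

Lemma Rmin_IZR a b : Rmin (IZR a) (IZR b) = IZR (Z.min a b).
Proof.
  destruct (Z.min_spec a b) as [[Hab ->] | [Hba ->]].
  - apply Rmin_left, IZR_le. lia.
  - apply Rmin_right, IZR_le. lia.
Qed.

Lemma Forall5 (P : R -> Prop) a b c d f :
  Forall P [a; b; c; d; f] <-> P a /\ P b /\ P c /\ P d /\ P f.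
Proof.
  split.
  - intros H. repeat match goal with H : Forall _ (_ :: _) |- _ => inversion_clear H end.
    tauto.
  - intros (? & ? & ? & ? & ?). repeat constructor; assumption.
Qed.

Definition gamma_coord (k1 k2 k3 k4 k5 : R) (j : nat) : R :=
  match j with
  | 1 => k1         | 2 => k2 + k4 + k5  | 3 => k1 + k3 + k5
  | 4 => k2         | 5 => k3 + k4 + k5  | 6 => k2 + k4 + k5
  | 7 => k3 + k4 + k5 | 8 => k4          | 9 => 2 * k4 + k5
  | 10 => k1 + k4 + k5 | 11 => k1 + k2 + k5 | 12 => k3
  | _ => 0
  end.

Lemma gammaE k1 k2 k3 k4 k5 j :
  gamma k1 k2 k3 k4 k5 j = gamma_coord k1 k2 k3 k4 k5 j.
Proof.
  unfold gamma, gamma1, gamma2, gamma3, gamma4, gamma5, e.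
  do 13 (destruct j as [|j]; [cbn; ring |]). cbn. ring.
Qed.

Lemma gamma_in_SR k1 k2 k3 k4 k5 : in_SR (gamma k1 k2 k3 k4 k5).
Proof.
  exists (k1 + k2 + k3 + 2 * k4 + 2 * k5). intros v Hv.
  unfold vertex_sum.
  do 9 (destruct v as [|v]; [try lia; cbn -[gamma]; rewrite !gammaE; cbn; ring |]).
  lia.
Qed.

Lemma in_S_gamma k1 k2 k3 k4 k5 :
  in_S (gamma k1 k2 k3 k4 k5) <->
  isN k1 /\ isN k2 /\ isN k3 /\ isN k4 /\
  isN (k2 + k4 + k5) /\ isN (k1 + k3 + k5) /\ isN (k3 + k4 + k5) /\
  isN (2 * k4 + k5) /\ isN (k1 + k4 + k5) /\ isN (k1 + k2 + k5).
Proof.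
  unfold in_S. setoid_rewrite gammaE.
  split.
  - intros [_ H].
    repeat split; [ apply (H 1%nat) | apply (H 4%nat) | apply (H 12%nat)
                  | apply (H 8%nat) | apply (H 2%nat) | apply (H 3%nat)
                  | apply (H 5%nat) | apply (H 9%nat) | apply (H 10%nat)
                  | apply (H 11%nat) ]; lia.
  - intros Hs. split; [apply gamma_in_SR |].
    intros i Hi.
    do 13 (destruct i as [|i]; [try lia; cbn; tauto |]). lia.
Qed.

Ltac fold_IZR :=
  repeat first [ rewrite <- plus_IZR | rewrite <- minus_IZR | rewrite <- opp_IZR
               | rewrite <- mult_IZR | rewrite Rmin_IZR ].

Lemma mainTheorem6_IZR h z1 z2 z3 z4 z5 :
  (in_S (gamma (IZR z1) (IZR z2) (IZR z3) (IZR z4) (IZR z5)) /\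
   Pprop h (IZR z1) (IZR z2) (IZR z3) (IZR z4) (IZR z5)) <->
  Forall isN (lvals h (IZR z1) (IZR z2) (IZR z3) (IZR z4) (IZR z5)).
Proof.
  rewrite in_S_gamma.
  destruct h; unfold Pprop, lvals; rewrite Forall5; fold_IZR;
    rewrite ?isN_IZR, ?isP_IZR, ?IZR_lt_iff, ?IZR_ge_iff; lia.
Qed.

Lemma Pprop_integral h k1 k2 k3 k4 k5 :
  Pprop h k1 k2 k3 k4 k5 -> Forall isZ [k1; k2; k3; k4; k5].
Proof.
  intros (H1 & H2 & H3 & H4 & H5). apply Forall5.
  repeat split; try (apply isN_isZ; assumption).
  destruct h; [apply isN_isZ, H5 | apply isP_opp_isZ, H5 ..].
Qed.

Ltac int_witness z := exists z; rewrite ?plus_IZR, ?minus_IZR, ?opp_IZR, ?mult_IZR; lra.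

(* The witnesses are the inverse of k |-> l, evaluated at l = (m1, ..., m5). *)
Lemma lvals_integral h k1 k2 k3 k4 k5 :
  Forall isN (lvals h k1 k2 k3 k4 k5) -> Forall isZ [k1; k2; k3; k4; k5].
Proof.
  destruct h; cbn [lvals]; rewrite !Forall5;
    intros (H1 & H2 & H3 & H4 & H5);
    apply isN_isZ in H1 as [m1 E1], H2 as [m2 E2], H3 as [m3 E3],
                        H4 as [m4 E4], H5 as [m5 E5];
    repeat split.
  - int_witness m1.
  - int_witness m2.
  - int_witness m3.
  - int_witness m4.
  - int_witness m5.
  - int_witness (m1 + m5 + 1)%Z.
  - int_witness m2.
  - int_witness m3.
  - int_witness (m4 + m5 + 1)%Z.
  - int_witness (- m5 - 1)%Z.
  - int_witness (m1 + m4 + m5 + 1)%Z.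
  - int_witness (m2 + m4 + 1)%Z.
  - int_witness (m3 + m4 + 1)%Z.
  - int_witness (m4 + m5 + 1)%Z.
  - int_witness (- 2 * m4 - m5 - 2)%Z.
  - int_witness (m4 + m5 + 1)%Z.
  - int_witness (m1 + m4 + 1)%Z.
  - int_witness (m2 + m4 + 1)%Z.
  - int_witness (m3 + m4 + m5 + 2)%Z.
  - int_witness (- 2 * m4 - m5 - 2)%Z.
  - int_witness m4.
  - int_witness (m1 + m4 + m5 + 1)%Z.
  - int_witness (m2 + m4 + m5 + 1)%Z.
  - int_witness (m3 + m4 + m5 + 1)%Z.
  - int_witness (- m5 - 2 * m4 - 1)%Z.
Qed.

Theorem mainTheorem6 :
  forall (h : hcase) (k1 k2 k3 k4 k5 : R),
    (in_S (gamma k1 k2 k3 k4 k5) /\ Pprop h k1 k2 k3 k4 k5) <->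
    Forall isN (lvals h k1 k2 k3 k4 k5).
Proof.
  intros h k1 k2 k3 k4 k5.
  assert (Hintegral : (in_S (gamma k1 k2 k3 k4 k5) /\ Pprop h k1 k2 k3 k4 k5) \/
                 Forall isN (lvals h k1 k2 k3 k4 k5) ->
                 Forall isZ [k1; k2; k3; k4; k5]).
  { intros [[_ HP] | HF].
    - exact (Pprop_integral _ _ _ _ _ _ HP).
    - exact (lvals_integral _ _ _ _ _ _ HF). }
  split; intros H;
    destruct (proj1 (Forall5 _ _ _ _ _ _) (Hintegral ltac:(tauto)))
      as ([z1 ->] & [z2 ->] & [z3 ->] & [z4 ->] & [z5 ->]);
    apply mainTheorem6_IZR; exact H.
Qed.
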